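(* Let $B\in\mathbb{R}^{r\times q}$ have orthonormal rows, with columns $b_1,\dots,b_q$, and let $\hat c_{ik}\in\{-1,+1\}$ be arbitrary signs. Let $\hat U\in\mathbb{R}^{n\times r}$ be a minimizer of $$\tilde U\mapsto\sum_{k=1}^q\sum_{i=1}^m\big(\hat c_{ik}y_{ik}-a_{ik}'\tilde U b_k\big)^2,$$ and let $\hat U = U^+R_U$ be a QR decomposition with $U^+\in\mathbb{R}^{n\times r}$ having orthonormal columns. Define, for $W\in\mathbb{R}^{n\times r}$, $$\mathrm{Term1}(W)=\sum_{i,k}b_k'W'a_{ik}a_{ik}'U^*(\tilde B^*B'b_k-\tilde b_k^* ),\quad \mathrm{Term2}(W)=\sum_{i,k}(c_{ik}\hat c_{ik}-1)(a_{ik}'Wb_k)(a_{ik}'x_k^* ),$$ $$\mathrm{Term3}(W)=\sum_{i,k}(a_{ik}'Wb_k)^2,$$ let $\mathcal{S}_W=\{W\in\mathbb{R}^{n\times r}:\|W\|_F=1\}$, and $$\mathrm{MainTerm}=\frac{\max_{W\in\mathcal{S}_W}|\mathrm{Term1}(W)|+\max_{W\in\mathcal{S}_W}|\mathrm{Term2}(W)|}{\min_{W\in\mathcal{S}_W}\mathrm{Term3}(W)}.$$ Assume $\min_{W\in\mathcal{S}_W}\mathrm{Term3}(W)>0$ (so the minimizer $\hat U$ is unique) and $\sigma_{\min}(U^*\Sigma^*B^*B')>\mathrm{MainTerm}$. Then $$\mathrm{SE}(U^+,U^* )\le\frac{\mathrm{MainTerm}}{\sigma_{\min}(U^*\Si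gma^*B^*B')-\mathrm{MainTerm}}.$$
   Context: $X^*=[x_1^*,\dots,x_q^*]\in\mathbb{R}^{n\times q}$ has rank $r$ with reduced SVD $X^*=U^*\Sigma^*B^*$, where $U^*\in\mathbb{R}^{n\times r}$ has orthonormal columns, $\Sigma^*\in\mathbb{R}^{r\times r}$ is diagonal positive, $B^*\in\mathbb{R}^{r\times q}$ has orthonormal rows; $\tilde B^*=\Sigma^*B^*$ with columns $\tilde b_k^*$, so $x_k^*=U^*\tilde b_k^*$. The vectors $a_{ik}\in\mathbb{R}^n$ ($i\in[m],k\in[q]$) are arbitrary (deterministic), $y_{ik}=|a_{ik}'x_k^*|$, and $c_{ik}\in\{-1,+1\}$ is the sign of $a_{ik}'x_k^*$ (any choice if it is zero), so $y_{ik}=c_{ik}a_{ik}'x_k^*$. $\sigma_{\min}(\cdot)$ is the $r$-th (smallest of the top $r$) singular value of an $n\times r$ matrix. For matrices $U_1,U_2$ with orthonormal columns, $\mathrm{SE}(U_1,U_2)=\|(I-U_1U_1')U_2\|$. *)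

From HB Require Import structures.
From mathcomp Require Import all_boot all_order all_algebra.
Set Implicit Arguments. Unset Strict Implicit. Unset Printing Implicit Defensive.
Import Order.TTheory GRing.Theory Num.Theory.
Local Open Scope ring_scope.

Definition dotv (R : pzRingType) (n : nat) (u v : 'cV[R]_n) : R :=
  \sum_(i < n) u i 0 * v i 0.

Definition vnorm (R : rcfType) (n : nat) (v : 'cV[R]_n) : R :=
  Num.sqrt (\sum_(i < n) v i 0 ^+ 2).

Definition frob (R : rcfType) (n p : nat) (W : 'M[R]_(n, p)) : R :=
  Num.sqrt (\sum_(i < n) \sum_(j < p) W i j ^+ 2).

Definition orthonormal_cols (R : pzRingType) (n p : nat) (U : 'M[R]_(n, p)) : Prop :=
  U^T *m U = 1%:M.
Definition orthonormal_rows (R : pzRingType) (n p : nat) (B : 'M[R]_(n, p)) : Prop :=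
  B *m B^T = 1%:M.

Definition is_max_on (T : Type) (R : numDomainType) (P : T -> Prop) (f : T -> R) (M : R) : Prop :=
  (exists2 x, P x & f x = M) /\ (forall x, P x -> f x <= M).
Definition is_min_on (T : Type) (R : numDomainType) (P : T -> Prop) (f : T -> R) (M : R) : Prop :=
  (exists2 x, P x & f x = M) /\ (forall x, P x -> M <= f x).

(* s is the r-th (smallest of the top r) singular value of the n x r matrix M:
   M = U diag(d) V' is a (thin) SVD with d nonnegative nonincreasing, and
   s is the last entry d_r. (Singular values are unique, so this determines s.) *)
Definition is_sigma_min (R : rcfType) (n r : nat) (M : 'M[R]_(n, r)) (s : R) : Prop :=
  exists (U : 'M[R]_(n, r)) (V : 'M[R]_r) (d : 'rV[R]_r),
    orthonormal_cols U /\ V^T *m V = 1%:M /\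
    (forall i, 0 <= d 0 i) /\
    (forall i j : 'I_r, (i <= j)%N -> d 0 j <= d 0 i) /\
    M = U *m diag_mx d *m V^T /\
    (exists2 i : 'I_r, val i = r.-1 & s = d 0 i).

Definition opnorm_le (R : rcfType) (n p : nat) (A : 'M[R]_(n, p)) (b : R) : Prop :=
  forall v : 'cV[R]_p, vnorm v = 1 -> vnorm (A *m v) <= b.

Definition SE_le (R : rcfType) (n r : nat) (U1 U2 : 'M[R]_(n, r)) (b : R) : Prop :=
  opnorm_le ((1%:M - U1 *m U1^T) *m U2) b.

(* Let G := U* Sigma* B* B' (the projection of X* on the row space of B),
   M := Sigma* B* B' (so G = U* M) and E := Uhat - G.
   1. Least squares.  Along the line s |-> G + s E the loss is a quadratic
      A - 2 s F + s^2 Q minimized at s = 1, hence Q <= F.  Here Q = Term3(E)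
      and F = Term2(E) - Term1(E): the residual of G against the signed data
      splits into a sign-error part and a projection-error part.
   2. Homogeneity.  Term1, Term2 are 1-homogeneous and Term3 is 2-homogeneous,
      so testing them at E / |E|_F on the unit sphere gives |E|_F <= MainTerm.
   3. Perturbation.  |M w| >= sigma_min |w|, so M is invertible; as
      (I - U+ U+') Uhat = 0, we get (I - U+ U+') U* v = -(I - U+ U+') E M^-1 v,
      whence SE(U+, U* ) <= |E|_F / sigma_min <= MainTerm / (sigma_min - MainTerm). *)

From HB Require Import structures.
From mathcomp Require Import all_boot all_order all_algebra.
From mathcomp Require Import ring lra.
Import Order.TTheory GRing.Theory Num.Theory.
Local Open Scope ring_scope.

Set Implicit Arguments. Unset Strict Implicit. Unset Printing Implicit Defensive.

Section InnerProduct.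
Variable R : comPzRingType.
Variable n : nat.
Implicit Types u v w : 'cV[R]_n.

Lemma dotvE u v : dotv u v = (u^T *m v) 0 0.
Proof. by rewrite /dotv !mxE; apply: eq_bigr => i _; rewrite !mxE. Qed.

Lemma dotvC u v : dotv u v = dotv v u.
Proof. by apply: eq_bigr => i _; rewrite mulrC. Qed.

Lemma dotvDZ u v w s : dotv u (v + s *: w) = dotv u v + s * dotv u w.
Proof.
rewrite /dotv mulr_sumr -big_split /=; apply: eq_bigr => i _; rewrite !mxE; ring.
Qed.

Lemma dotvZ u w s : dotv u (s *: w) = s * dotv u w.
Proof. by rewrite -[s *: w]add0r dotvDZ /dotv big1 ?add0r // => i _; rewrite mxE mulr0. Qed.

Lemma dotvB u v w : dotv u (v - w) = dotv u v - dotv u w.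
Proof. by rewrite -scaleN1r dotvDZ mulN1r. Qed.

End InnerProduct.

Section SquaredNorms.
Variable R : rcfType.

Definition nsq (n : nat) (v : 'cV[R]_n) : R := \sum_(i < n) v i 0 ^+ 2.
Definition fnorm2 (n p : nat) (W : 'M[R]_(n, p)) : R :=
  \sum_(i < n) \sum_(j < p) W i j ^+ 2.

Lemma nsq_ge0 n (v : 'cV[R]_n) : 0 <= nsq v.
Proof. by apply: sumr_ge0 => i _; apply: sqr_ge0. Qed.

Lemma fnorm2_ge0 n p (W : 'M[R]_(n, p)) : 0 <= fnorm2 W.
Proof. by apply: sumr_ge0 => i _; apply: sumr_ge0 => j _; apply: sqr_ge0. Qed.

Lemma nsqE n (v : 'cV[R]_n) : nsq v = (v^T *m v) 0 0.
Proof. by rewrite /nsq !mxE; apply: eq_bigr => i _; rewrite !mxE expr2. Qed.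

Lemma nsq_eq0 n (v : 'cV[R]_n) : nsq v = 0 -> v = 0.
Proof.
move=> v0; apply/matrixP => i j; rewrite ord1 mxE.
have /eqP := psumr_eq0P (fun i _ => sqr_ge0 (v i 0)) v0 (i := i) isT.
by rewrite sqrf_eq0 => /eqP.
Qed.

Lemma fnorm2Z n p s (W : 'M[R]_(n, p)) : fnorm2 (s *: W) = s ^+ 2 * fnorm2 W.
Proof.
rewrite /fnorm2 mulr_sumr; apply: eq_bigr => i _; rewrite mulr_sumr.
by apply: eq_bigr => j _; rewrite mxE exprMn.
Qed.

Lemma nsq_unit n (v : 'cV[R]_n) : vnorm v = 1 -> nsq v = 1.
Proof.
by move=> /(congr1 (fun x => x ^+ 2)); rewrite /= sqr_sqrtr ?nsq_ge0 // expr1n.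
Qed.

Lemma nsq_orth n p (U : 'M[R]_(n, p)) v : orthonormal_cols U -> nsq (U *m v) = nsq v.
Proof. by move=> HU; rewrite !nsqE trmx_mul -mulmxA (mulmxA U^T) HU mul1mx. Qed.

(* The orthogonal projection I - U U' onto the complement of range U is
   a contraction: |x - U U'x|^2 = |x|^2 - |U'x|^2. *)
Lemma nsq_proj n p (U : 'M[R]_(n, p)) x : orthonormal_cols U ->
  nsq ((1%:M - U *m U^T) *m x) <= nsq x.
Proof.
move=> HU; set y := U^T *m x.
have -> : (1%:M - U *m U^T) *m x = x - U *m y by rewrite mulmxBl mul1mx mulmxA.
have xU : x^T *m U = y^T by rewrite /y trmx_mul trmxK.
have pythagoras : (x - U *m y)^T *m (x - U *m y) = x^T *m x - y^T *m y.
  have -> : (x - U *m y)^T = x^T - y^T *m U^T.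
    by rewrite -trmx_mul; apply/matrixP => i j; rewrite !mxE.
  rewrite mulmxBl !mulmxBr -!mulmxA (mulmxA x^T) xU.
  by rewrite (mulmxA U^T U) HU mul1mx -/y subrr subr0.
rewrite !nsqE pythagoras.
have -> : (x^T *m x - y^T *m y) 0 0 = (x^T *m x) 0 0 - (y^T *m y) 0 0 by rewrite !mxE.
by rewrite gerBl -nsqE nsq_ge0.
Qed.

Lemma cauchy_schwarz p (u w : 'I_p -> R) :
  (\sum_j u j * w j) ^+ 2 <= (\sum_j u j ^+ 2) * (\sum_j w j ^+ 2).
Proof.
set A := \sum_j u j ^+ 2; set B := \sum_j u j * w j; set C := \sum_j w j ^+ 2.
have C0 : 0 <= C by apply: sumr_ge0 => j _; apply: sqr_ge0.
have [Ceq0|CNZ] := eqVneq C 0.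
  have w0 j : w j = 0.
    have /eqP := psumr_eq0P (fun j _ => sqr_ge0 (w j)) Ceq0 (i := j) isT.
    by rewrite sqrf_eq0 => /eqP.
  by rewrite /B big1 ?expr0n ?Ceq0 ?mulr0 // => j _; rewrite w0 mulr0.
(* expand 0 <= sum_j (u j - t w j)^2 at the minimizing t = B / C *)
set t := B / C.
have tC : t * C = B by rewrite /t divfK.
have expand : \sum_j (u j - t * w j) ^+ 2 = A - 2 * t * B + t ^+ 2 * C.
  rewrite /A /B /C !mulr_sumr -sumrB -big_split /=; apply: eq_bigr => j _; ring.
have : 0 <= A - 2 * t * B + t ^+ 2 * C.
  by rewrite -expand; apply: sumr_ge0 => j _; apply: sqr_ge0.
have -> : A - 2 * t * B + t ^+ 2 * C = A - t * B by rewrite -tC; ring.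
move=> ge0; have := mulr_ge0 C0 ge0.
have -> : C * (A - t * B) = A * C - B ^+ 2 by rewrite -tC; ring.
by rewrite subr_ge0.
Qed.

Lemma nsq_mul_le n p (E : 'M[R]_(n, p)) w : nsq (E *m w) <= fnorm2 E * nsq w.
Proof.
rewrite /nsq /fnorm2 mulr_suml; apply: ler_sum => i _; rewrite mxE.
exact: cauchy_schwarz (fun j => E i j) (fun j => w j 0).
Qed.

End SquaredNorms.

Section SmallestSingularValue.
Variable R : rcfType.

(* If s is the smallest singular value of M (an n x r matrix with SVD
   U diag(d) V'), then |M w| >= s |w|: U and V' are isometries and every
   singular value d_i is at least s >= 0. *)
Lemma sigma_min_lower n r (M : 'M[R]_(n, r)) s : is_sigma_min M s ->
  forall w, s ^+ 2 * nsq w <= nsq (M *m w).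
Proof.
move=> [U [V [d [HU [HV [d_ge0 [d_decr [-> [ilast ilastE ->]]]]]]]]].
have d_ge_s i : d 0 ilast <= d 0 i.
  by apply: d_decr; rewrite ilastE -ltnS prednK ?ltn_ord // (leq_ltn_trans _ (ltn_ord i)).
move=> w.
have HVt : orthonormal_cols V^T by rewrite /orthonormal_cols trmxK; apply: mulmx1C.
rewrite -!mulmxA nsq_orth // -(nsq_orth w HVt) mul_diag_mx /nsq mulr_sumr.
apply: ler_sum => i _; rewrite [X in _ <= X ^+ 2]mxE exprMn ler_wpM2r ?sqr_ge0 //.
by rewrite ler_sqr ?nnegrE.
Qed.

(* A square matrix bounded below by s > 0 has trivial kernel, hence is
   invertible. *)
Lemma lower_bound_unitmx r (M : 'M[R]_r) s :
  0 < s -> (forall w, s ^+ 2 * nsq w <= nsq (M *m w)) -> M \in unitmx.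
Proof.
move=> s_gt0 low; rewrite unitmxE unitfE -det_tr.
apply/negP => /det0P [v vNZ vM].
have MvT : M *m v^T = 0 by rewrite -[M]trmxK -trmx_mul vM trmx0.
have nsq_v0 : nsq v^T = 0.
  have nsq0 : nsq (0 : 'cV[R]_r) = 0 by apply: big1 => i _; rewrite mxE expr0n.
  apply/eqP; rewrite eq_le nsq_ge0 andbT -(pmulr_rle0 _ (exprn_gt0 2 s_gt0)).
  by rewrite -nsq0 -MvT low.
by move: vNZ; rewrite -trmx_eq0 (nsq_eq0 nsq_v0) eqxx.
Qed.

End SmallestSingularValue.

Section LeastSquares.
Variable R : realFieldType.

Lemma quadratic_min_at1 (A F Q : R) : 0 <= Q ->
  (forall s, A - 2 * F + Q <= A - 2 * s * F + s ^+ 2 * Q) -> Q <= F.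
Proof.
move=> Q_ge0 min1; have [Q0|QNZ] := eqVneq Q 0.
  by have := min1 0; rewrite Q0; lra.
have Q_gt0 : 0 < Q by rewrite lt_def QNZ Q_ge0.
(* compare with the value at the true minimizer s = F / Q *)
set s := F / Q; have sQ : s * Q = F by rewrite divfK.
have := min1 s; have -> : A - 2 * s * F + s ^+ 2 * Q = A - s * F by rewrite -sQ; ring.
move=> le_min; have : (Q - F) ^+ 2 <= 0.
  have -> : (Q - F) ^+ 2 = Q * (Q - 2 * F + s * F) by rewrite -sQ; ring.
  by rewrite pmulr_rle0 //; lra.
move=> sq_le0; have /eqP : (Q - F) ^+ 2 = 0 by apply/eqP; rewrite eq_le sq_le0 sqr_ge0.
by rewrite sqrf_eq0 subr_eq0 => /eqP ->.
Qed.

Variables (n r m q : nat) (a : 'I_m -> 'I_q -> 'cV[R]_n) (B : 'M[R]_(r, q)).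

Definition meas (U : 'M[R]_(n, r)) (i : 'I_m) (k : 'I_q) : R :=
  dotv (a i k) (U *m col k B).
Definition lsq_loss (z : 'I_m -> 'I_q -> R) (U : 'M[R]_(n, r)) : R :=
  \sum_(k < q) \sum_(i < m) (z i k - meas U i k) ^+ 2.

Lemma measDZ G E s i k : meas (G + s *: E) i k = meas G i k + s * meas E i k.
Proof. by rewrite /meas mulmxDl -scalemxAl dotvDZ. Qed.

Lemma measZ s W i k : meas (s *: W) i k = s * meas W i k.
Proof. by rewrite /meas -scalemxAl dotvZ. Qed.

Lemma lsq_optimality z Uhat G : (forall U, lsq_loss z Uhat <= lsq_loss z U) ->
  \sum_(k < q) \sum_(i < m) meas (Uhat - G) i k ^+ 2 <=
  \sum_(k < q) \sum_(i < m) (z i k - meas G i k) * meas (Uhat - G) i k.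
Proof.
move=> Uhat_min; set E := Uhat - G.
pose sum2 (f : 'I_q -> 'I_m -> R) := \sum_(k < q) \sum_(i < m) f k i.
have loss_line s : lsq_loss z (G + s *: E) =
    sum2 (fun k i => (z i k - meas G i k) ^+ 2)
    - 2 * s * sum2 (fun k i => (z i k - meas G i k) * meas E i k)
    + s ^+ 2 * sum2 (fun k i => meas E i k ^+ 2).
  rewrite /sum2 !mulr_sumr -!sumrB -!big_split /=; apply: eq_bigr => k _.
  rewrite !mulr_sumr -!sumrB -!big_split /=; apply: eq_bigr => i _.
  by rewrite measDZ; ring.
apply: (quadratic_min_at1 (A := sum2 (fun k i => (z i k - meas G i k) ^+ 2))).
  by apply: sumr_ge0 => k _; apply: sumr_ge0 => i _; apply: sqr_ge0.
have Uhat_line : Uhat = G + 1 *: E by rewrite scale1r /E addrC subrK.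
move=> s; have := Uhat_min (G + s *: E).
by rewrite Uhat_line !loss_line mulr1 expr1n mul1r.
Qed.

End LeastSquares.

Section HomogeneousRatio.
Variables (R : rcfType) (n p : nat).
Variables (T1 T2 T3 : 'M[R]_(n, p) -> R) (t1 t2 t3 : R).

Hypotheses (T1Z : forall s W, T1 (s *: W) = s * T1 W)
  (T2Z : forall s W, T2 (s *: W) = s * T2 W)
  (T3Z : forall s W, T3 (s *: W) = s ^+ 2 * T3 W).
Hypotheses (T1_max : forall W, frob W = 1 -> `|T1 W| <= t1)
  (T2_max : forall W, frob W = 1 -> `|T2 W| <= t2)
  (T3_min : forall W, frob W = 1 -> t3 <= T3 W).
Hypotheses (t3_gt0 : 0 < t3) (t12_ge0 : 0 <= t1 + t2).

(* Any E with T3 E <= T2 E - T1 E satisfies |E|_F <= (t1 + t2) / t3: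
   writing E = rho W with |W|_F = 1 gives rho^2 t3 <= rho (t1 + t2). *)
Lemma frob_le_ratio E : T3 E <= T2 E - T1 E -> frob E <= (t1 + t2) / t3.
Proof.
move=> energy; set rho := frob E.
have rho_ge0 : 0 <= rho by apply: sqrtr_ge0.
have [rho0|rhoNZ] := eqVneq rho 0; first by rewrite rho0 divr_ge0 // ltW.
have rho_gt0 : 0 < rho by rewrite lt_def rhoNZ rho_ge0.
set W := rho^-1 *: E.
have W_unit : frob W = 1.
  rewrite /frob -/(fnorm2 W) fnorm2Z exprVn -[fnorm2 E]sqr_sqrtr ?fnorm2_ge0 //.
  by rewrite -/(frob E) -/rho mulVf ?sqrtr1 // expf_neq0.
have EW : E = rho *: W by rewrite /W scalerA mulfV // scale1r.
move: energy; rewrite EW T1Z T2Z T3Z => energy.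
have bound : rho * t3 <= t1 + t2.
  rewrite -(ler_pM2l rho_gt0) mulrA -expr2.
  apply: le_trans (ler_wpM2l (sqr_ge0 rho) (T3_min W_unit)) _.
  apply: le_trans energy _; rewrite -mulrBr ler_wpM2l //.
  have := T1_max W_unit; have := T2_max W_unit.
  have := ler_norm (T2 W); have := ler_norm (- T1 W); rewrite normrN; lra.
by rewrite ler_pdivlMr.
Qed.

End HomogeneousRatio.

Section SubspacePerturbation.
Variable R : rcfType.

Lemma SE_le_mono n r (U1 U2 : 'M[R]_(n, r)) b b' :
  b <= b' -> SE_le U1 U2 b -> SE_le U1 U2 b'.
Proof. by move=> le_bb' SEb v /SEb /le_trans; apply. Qed.

(* Suppose range U+ contains range Uhat, and Ustar M = Uhat - E for an
   invertible M with |M w| >= s |w|.  Then the part of Ustar outside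
   range U+ is the projection of -E M^-1, so SE(U+, Ustar) <= |E|_F / s. *)
Lemma SE_le_perturbation n r (Uplus Ustar Uhat E : 'M[R]_(n, r)) (RU M : 'M[R]_r) s :
  orthonormal_cols Uplus -> Uhat = Uplus *m RU -> Ustar *m M = Uhat - E ->
  0 < s -> (forall w, s ^+ 2 * nsq w <= nsq (M *m w)) ->
  SE_le Uplus Ustar (frob E / s).
Proof.
move=> HUp HQR UstarM s_gt0 low v /nsq_unit v_unit.
set P := 1%:M - Uplus *m Uplus^T.
have PUhat : P *m Uhat = 0.
  by rewrite HQR mulmxA mulmxBl mul1mx -(mulmxA Uplus) HUp mulmx1 subrr mul0mx.
set w := invmx M *m v.
have Mw : M *m w = v by rewrite /w mulKVmx // (lower_bound_unitmx s_gt0 low).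
have w_small : s ^+ 2 * nsq w <= 1 by rewrite -v_unit -Mw low.
have residual : P *m Ustar *m v = - (P *m (E *m w)).
  by rewrite -Mw -mulmxA (mulmxA Ustar) UstarM (mulmxBl Uhat) mulmxBr mulmxA PUhat mul0mx sub0r.
set N := nsq (P *m Ustar *m v).
have N_le : N <= fnorm2 E * nsq w.
  have nsqN (x : 'cV[R]_n) : nsq (- x) = nsq x by apply: eq_bigr => i _; rewrite mxE sqrrN.
  rewrite /N residual nsqN; apply: le_trans (nsq_proj _ HUp) _; exact: nsq_mul_le.
have N_frob : N <= (frob E / s) ^+ 2.
  rewrite expr_div_n sqr_sqrtr ?fnorm2_ge0 // ler_pdivlMr ?exprn_gt0 //.
  apply: le_trans (ler_wpM2r (ltW (exprn_gt0 2 s_gt0)) N_le) _.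
  rewrite -mulrA [nsq w * _]mulrC -[X in _ <= X]mulr1 ler_wpM2l ?fnorm2_ge0 //.
rewrite /vnorm -/(nsq _) -/N; apply: le_trans (ler_wsqrtr N_frob) _.
by rewrite sqrtr_sqr ger0_norm // divr_ge0 ?sqrtr_ge0 ?ltW.
Qed.

End SubspacePerturbation.

Section PhaseRetrievalModel.
Variables (R : rcfType) (n m q r : nat).
Variables (Ustar : 'M[R]_(n, r)) (sig : 'rV[R]_r) (Bstar : 'M[R]_(r, q)).
Variables (a : 'I_m -> 'I_q -> 'cV[R]_n) (c chat : 'I_m -> 'I_q -> R) (B : 'M[R]_(r, q)).

Definition Btilde : 'M[R]_(r, q) := diag_mx sig *m Bstar.
Definition signal (k : 'I_q) : 'cV[R]_n := Ustar *m col k Btilde.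

Definition term1 (W : 'M[R]_(n, r)) : R :=
  \sum_(i < m) \sum_(k < q)
    ((col k B)^T *m W^T *m a i k *m (a i k)^T *m Ustar
       *m (Btilde *m B^T *m col k B - col k Btilde)) 0 0.
Definition term2 (W : 'M[R]_(n, r)) : R :=
  \sum_(i < m) \sum_(k < q)
    (c i k * chat i k - 1) * dotv (a i k) (W *m col k B) * dotv (a i k) (signal k).
Definition term3 (W : 'M[R]_(n, r)) : R :=
  \sum_(i < m) \sum_(k < q) dotv (a i k) (W *m col k B) ^+ 2.

(* The reference point G = U* Sigma* B* B', i.e. the projection of X* onto
   the row space of B. *)
Definition refpt : 'M[R]_(n, r) := Ustar *m (Btilde *m B^T).

Lemma term1E W : term1 W =
  \sum_(i < m) \sum_(k < q) meas a B W i k * (meas a B refpt i k - dotv (a i k) (signal k)).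
Proof.
apply: eq_bigr => i _; apply: eq_bigr => k _.
have -> : meas a B refpt i k - dotv (a i k) (signal k) =
    dotv (a i k) (Ustar *m (Btilde *m B^T *m col k B - col k Btilde)).
  by rewrite /meas /refpt /signal mulmxBr dotvB !mulmxA.
have -> : (col k B)^T *m W^T *m a i k *m (a i k)^T *m Ustar
       *m (Btilde *m B^T *m col k B - col k Btilde) =
    ((W *m col k B)^T *m a i k) *m ((a i k)^T *m (Ustar *m (Btilde *m B^T *m col k B - col k Btilde))).
  by rewrite trmx_mul !mulmxA.
by rewrite mxE big_ord1 -dotvE dotvC -dotvE.
Qed.

Lemma term1Z s W : term1 (s *: W) = s * term1 W.
Proof.
rewrite !term1E mulr_sumr; apply: eq_bigr => i _; rewrite mulr_sumr.
by apply: eq_bigr => k _; rewrite measZ mulrA.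
Qed.

Lemma term2Z s W : term2 (s *: W) = s * term2 W.
Proof.
rewrite /term2 mulr_sumr; apply: eq_bigr => i _; rewrite mulr_sumr.
by apply: eq_bigr => k _; rewrite -scalemxAl dotvZ; ring.
Qed.

Lemma term3Z s W : term3 (s *: W) = s ^+ 2 * term3 W.
Proof.
rewrite /term3 mulr_sumr; apply: eq_bigr => i _; rewrite mulr_sumr.
by apply: eq_bigr => k _; rewrite -scalemxAl dotvZ exprMn.
Qed.

(* With y_ik = c_ik a_ik' x*_k, the residual of G against the signed data
   chat_ik y_ik splits into a sign-error part (Term2) and a projection-error
   part (Term1). *)
Hypothesis y_sign : forall i k,
  `|dotv (a i k) (signal k)| = c i k * dotv (a i k) (signal k).

Lemma residual_correlation W :
  \sum_(k < q) \sum_(i < m)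
    (chat i k * `|dotv (a i k) (signal k)| - meas a B refpt i k) * meas a B W i k
  = term2 W - term1 W.
Proof.
rewrite term1E /term2 -sumrB exchange_big /=; apply: eq_bigr => i _.
by rewrite -sumrB; apply: eq_bigr => k _; rewrite y_sign /meas; ring.
Qed.

End PhaseRetrievalModel.

Unset Implicit Arguments.

Theorem mainTheorem6 (R : rcfType) (n m q r : nat)
  (Ustar : 'M[R]_(n, r)) (sig : 'rV[R]_r) (Bstar : 'M[R]_(r, q))
  (a : 'I_m -> 'I_q -> 'cV[R]_n) (c chat : 'I_m -> 'I_q -> R)
  (B : 'M[R]_(r, q)) (Uhat Uplus : 'M[R]_(n, r)) (RU : 'M[R]_r)
  (t1 t2 t3 smin : R) :
  (0 < r)%N ->
  (* reduced SVD X* = U* Sigma* B* *)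
  orthonormal_cols Ustar ->
  (forall j, 0 < sig 0 j) ->
  (forall i j : 'I_r, (i <= j)%N -> sig 0 j <= sig 0 i) ->
  orthonormal_rows Bstar ->
  let Btil := diag_mx sig *m Bstar in
  let xs := fun k : 'I_q => Ustar *m col k Btil in
  let y := fun i k => `|dotv (a i k) (xs k)| in
  (forall i k, c i k = 1 \/ c i k = -1) ->
  (forall i k, y i k = c i k * dotv (a i k) (xs k)) ->
  (* B with orthonormal rows, arbitrary signs chat *)
  orthonormal_rows B ->
  (forall i k, chat i k = 1 \/ chat i k = -1) ->
  (* Uhat minimizes the least-squares loss *)
  let loss := fun Ut : 'M[R]_(n, r) =>
    \sum_(k < q) \sum_(i < m) (chat i k * y i k - dotv (a i k) (Ut *m col k B)) ^+ 2 in
  (forall Ut, loss Uhat <= loss Ut) ->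
  (* QR decomposition Uhat = U+ R_U *)
  Uhat = Uplus *m RU ->
  orthonormal_cols Uplus ->
  (forall i j : 'I_r, (j < i)%N -> RU i j = 0) ->
  let SW := fun W : 'M[R]_(n, r) => frob W = 1 in
  let Term1 := fun W : 'M[R]_(n, r) =>
    \sum_(i < m) \sum_(k < q)
      ((col k B)^T *m W^T *m a i k *m (a i k)^T *m Ustar
         *m (Btil *m B^T *m col k B - col k Btil)) 0 0 in
  let Term2 := fun W : 'M[R]_(n, r) =>
    \sum_(i < m) \sum_(k < q)
      (c i k * chat i k - 1) * dotv (a i k) (W *m col k B) * dotv (a i k) (xs k) in
  let Term3 := fun W : 'M[R]_(n, r) =>
    \sum_(i < m) \sum_(k < q) dotv (a i k) (W *m col k B) ^+ 2 in
  is_max_on SW (fun W => `|Term1 W|) t1 ->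
  is_max_on SW (fun W => `|Term2 W|) t2 ->
  is_min_on SW Term3 t3 ->
  let MainTerm := (t1 + t2) / t3 in
  0 < t3 ->
  is_sigma_min (Ustar *m diag_mx sig *m Bstar *m B^T) smin ->
  MainTerm < smin ->
  SE_le Uplus Ustar (MainTerm / (smin - MainTerm)).
Proof.
move=> _ HUs _ _ _ Btil xs y _ y_sign _ _ loss Uhat_min HQR HUp _ SW Term1 Term2 Term3
  [[W1 _ t1E] T1_max] [[W2 _ t2E] T2_max] [_ T3_min] MT t3_gt0 Hsmin MT_lt.
set M := diag_mx sig *m Bstar *m B^T; set G := refpt Ustar sig Bstar B.
set E := Uhat - G.
have GM : G = Ustar *m M by rewrite /G /refpt /M !mulmxA.
have energy : term3 a B E <= term2 Ustar sig Bstar a c chat B E - term1 Ustar sig Bstar a B E.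
  rewrite -(residual_correlation _ _ y_sign) /term3 exchange_big /=.
  exact: lsq_optimality G Uhat_min.
have t12_ge0 : 0 <= t1 + t2 by rewrite -t1E -t2E addr_ge0.
(* homogeneity turns the energy inequality into |E|_F <= MainTerm *)
have E_small : frob E <= MT.
  exact: (frob_le_ratio (term1Z Ustar sig Bstar a B) (term2Z Ustar sig Bstar a c chat B)
    (term3Z a B) T1_max T2_max T3_min t3_gt0 t12_ge0 energy).
(* |M w| >= smin |w|, since U* is an isometry and sigma_min(U* M) = smin *)
have low := sigma_min_lower Hsmin.
have lowM w : smin ^+ 2 * nsq w <= nsq (M *m w).
  by rewrite -(nsq_orth (M *m w) HUs) /M !mulmxA low.
have MT_ge0 : 0 <= MT by rewrite divr_ge0 // ltW.
have smin_gt0 : 0 < smin by apply: le_lt_trans MT_lt.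
have UstarM : Ustar *m M = Uhat - E by rewrite -GM /E opprB addrC subrK.
(* SE <= |E|_F / smin <= MainTerm / smin <= MainTerm / (smin - MainTerm) *)
apply: SE_le_mono (SE_le_perturbation HUp HQR UstarM smin_gt0 lowM).
have gap_gt0 : 0 < smin - MT by rewrite subr_gt0.
apply: (@le_trans _ _ (MT / smin)); first by rewrite ler_pM2r ?invr_gt0.
by rewrite ler_wpM2l // lef_pV2 ?posrE // gerBl.
Qed.
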